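(* Let $\mathcal A\in\mathbb C^{n_1\times n_2\times n_3}$ and let $\mathcal A^{-,\dagger}$ be a fixed element of $\mathcal A\{-,\dagger\}$. Then $$\mathcal A\{-,\dagger\}=\left\{\mathcal A^{-,\dagger}+(\mathcal I-\mathcal A^{-,\dagger}\mathcal A)\mathcal W\mathcal A\mathcal A^{-,\dagger}\ :\ \mathcal W\in\mathbb C^{n_2\times n_1\times n_3}\right\}.$$
   Context: Fix a nonsingular matrix $M\in\mathbb C^{n_3\times n_3}$. For $\mathcal C\in\mathbb C^{n_1\times n_2\times n_3}$ let $\widehat{\mathcal C}=\mathcal C\times_3M$, i.e. $\widehat{\mathcal C}_{ijk}=\sum_{l=1}^{n_3}M_{kl}\mathcal C_{ijl}$, and let $\widehat{\mathcal C}^{(i)}$ denote its $i$-th frontal slice. The M-product $\mathcal C\star_M\mathcal D$ of $\mathcal C\in\mathbb C^{n_1\times n_2\times n_3}$ and $\mathcal D\in\mathbb C^{n_2\times l\times n_3}$ is the unique tensor with $\widehat{\mathcal C\star_M\mathcal D}^{(i)}=\widehat{\mathcal C}^{(i)}\widehat{\mathcal D}^{(i)}$ for all $i\in[n_3]$. Juxtaposition of tensors denotes the M-product. The identity tensor $\mathcal I\in\mathbb C^{n\times n\times n_3}$ is defined by $\widehat{\mathcal I}^{(i)}=I_n$ for all $i$. The conjugate transpose $\mathcal A^*$ is defined by $\widehat{\mathcal A^*}^{(i)}=(\widehat{\mathcal A}^{(i)})^*$. The Moore–Penrose inverse $\mathcal A^\dagger$ is the unique $\mathcal W$ satisfying (1)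 $\mathcal A\mathcal W\mathcal A=\mathcal A$, (2) $\mathcal W\mathcal A\mathcal W=\mathcal W$, (3) $(\mathcal A\mathcal W)^*=\mathcal A\mathcal W$, (4) $(\mathcal W\mathcal A)^*=\mathcal W\mathcal A$. $\mathcal A\{1\}$ is the set of all $\mathcal W$ satisfying (1). The set of 1-MP inverses is $\mathcal A\{-,\dagger\}=\{\mathcal A^-\mathcal A\mathcal A^\dagger:\mathcal A^-\in\mathcal A\{1\}\}$. *)

From HB Require Import structures.
From mathcomp Require Import all_boot all_order all_algebra.
From mathcomp Require Import complex.
From mathcomp Require Import reals.
Set Implicit Arguments. Unset Strict Implicit. Unset Printing Implicit Defensive.
Import Order.TTheory GRing.Theory Num.Theory.
Local Open Scope ring_scope.

Section Tensors.
Variable R : realType.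
Local Notation C := R[i].

(* A tensor in C^{n1 x n2 x n3}, stored by frontal slices: (T k) i j = T_{ijk}. *)
Definition tensor (n1 n2 n3 : nat) := {ffun 'I_n3 -> 'M[C]_(n1, n2)}.

Variable n3 : nat.
Variable M : 'M[C]_n3.

(* hat T = T x_3 M : (hat T)^{(k)} = \sum_l M_{kl} T^{(l)} *)
Definition thats n1 n2 (T : tensor n1 n2 n3) : tensor n1 n2 n3 :=
  [ffun k => \sum_l M k l *: T l].

(* inverse mode-3 transform: the unique tensor whose hat has the given slices
   (M is assumed nonsingular where used). *)
Definition tunhat n1 n2 (S : tensor n1 n2 n3) : tensor n1 n2 n3 :=
  [ffun l => \sum_k (invmx M) l k *: S k].

Definition tprod n1 n2 l (A : tensor n1 n2 n3) (B : tensor n2 l n3) : tensor n1 l n3 :=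
  tunhat [ffun k => thats A k *m thats B k].

Definition tid n : tensor n n n3 := tunhat [ffun _ => 1%:M].

Definition tconjT n1 n2 (A : tensor n1 n2 n3) : tensor n2 n1 n3 :=
  tunhat [ffun k => map_mx (@conjc R) (thats A k)^T].

Definition is_MP n1 n2 (A : tensor n1 n2 n3) (W : tensor n2 n1 n3) : Prop :=
  [/\ tprod (tprod A W) A = A,
      tprod (tprod W A) W = W,
      tconjT (tprod A W) = tprod A W &
      tconjT (tprod W A) = tprod W A].

Definition is_inner_inv n1 n2 (A : tensor n1 n2 n3) (W : tensor n2 n1 n3) : Prop :=
  tprod (tprod A W) A = A.

Definition is_one_MP n1 n2 (A : tensor n1 n2 n3) (X : tensor n2 n1 n3) : Prop :=
  exists G : tensor n2 n1 n3, exists P : tensor n2 n1 n3,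
    [/\ is_inner_inv A G, is_MP A P & X = tprod (tprod G A) P].

End Tensors.

From HB Require Import structures.
From mathcomp Require Import all_boot all_order all_algebra.
From mathcomp Require Import complex.
From mathcomp Require Import reals.
Import GRing.Theory Num.Theory.
Local Open Scope ring_scope.
Set Implicit Arguments.
Unset Strict Implicit.
Unset Printing Implicit Defensive.

(** Every M-product identity is equivalent to the same identity holding in
    each frontal slice of the transformed tensors, so the theorem reduces to a
    statement about one matrix [a] with an inner inverse [g0] and a
    Moore-Penrose inverse [p].  The product [a p] is the orthogonal projector
    onto the range of [a], hence does not depend on the choice of [p].  Every
    inner inverse of [a] has the form [g0 + (1 - g0 a) w a p] (take [w = g]),
    and with [x0 = g0 a p] the 1-MP inverse of such an inner inverse is
    [x0 + (1 - x0 a) w a x0]. *)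

Section SymmetricInnerInverse.
Variables (K : comNzRingType) (f : {rmorphism K -> K}) (m n : nat).
Local Open Scope sesquilinear_scope.

Lemma maptrmx_mul q r (X : 'M[K]_(m, q)) (Y : 'M[K]_(q, r)) :
  (X *m Y) ^t f = Y ^t f *m X ^t f.
Proof. by rewrite trmx_mul map_mxM. Qed.

Lemma sym_inner_inv_mulmx_eq (a : 'M[K]_(m, n)) (p p' : 'M[K]_(n, m)) :
  a *m p *m a = a -> (a *m p) ^t f = a *m p ->
  a *m p' *m a = a -> (a *m p') ^t f = a *m p' ->
  a *m p = a *m p'.
Proof.
move=> apa sym_ap ap'a sym_ap'.
have -> : a *m p = (a *m p') *m (a *m p) by rewrite mulmxA ap'a.
by rewrite -sym_ap' -sym_ap -maptrmx_mul mulmxA apa sym_ap'.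
Qed.

End SymmetricInnerInverse.

Section InnerInverseShift.
Variables (K : nzRingType) (m n : nat) (a : 'M[K]_(m, n)) (g0 p : 'M[K]_(n, m)).
Hypotheses (ag0a : a *m g0 *m a = a) (apa : a *m p *m a = a).

Definition inner_inv_shift (w : 'M[K]_(n, m)) := g0 + (1%:M - g0 *m a) *m w *m a *m p.

Definition one_MP_param (x0 w : 'M[K]_(n, m)) := x0 + (1%:M - x0 *m a) *m w *m a *m x0.

Lemma mulmx_inner_inv {b} :
  a *m b *m a = a -> forall q (X : 'M[K]_(q, m)), X *m a *m b *m a = X *m a.
Proof. by move=> aba q X; rewrite -!mulmxA (mulmxA a) aba. Qed.

Lemma inner_inv_shiftP w : a *m inner_inv_shift w *m a = a.
Proof.
have a_g0a : a *m (1%:M - g0 *m a) = 0 by rewrite mulmxBr mulmx1 mulmxA ag0a subrr.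
by rewrite mulmxDr mulmxDl ag0a !mulmxA a_g0a !mul0mx addr0.
Qed.

Lemma inner_inv_shift_self {g} :
  a *m g *m a = a -> inner_inv_shift g *m a *m p = g *m a *m p.
Proof.
move=> aga; rewrite !mulmxDl mul1mx !mulNmx !(mulmx_inner_inv apa).
by rewrite (mulmx_inner_inv aga) addrC subrK.
Qed.

Lemma inner_inv_shift_param w :
  inner_inv_shift w *m a *m p = one_MP_param (g0 *m a *m p) w.
Proof.
rewrite /one_MP_param !mulmxA (mulmx_inner_inv apa) (mulmx_inner_inv ag0a).
by rewrite !mulmxDl !(mulmx_inner_inv apa).
Qed.

End InnerInverseShift.

Section Mode3Product.
Variables (K : nzRingType) (n3 m n : nat).

(* [thats M] and [tunhat M] are [mode3 M] and [mode3 (invmx M)] up to conversion. *)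
Definition mode3 (P : 'M[K]_n3) (T : {ffun 'I_n3 -> 'M[K]_(m, n)}) :=
  [ffun k => \sum_l P k l *: T l].

Lemma mode3_mul P Q T : mode3 P (mode3 Q T) = mode3 (P *m Q) T.
Proof.
apply/ffunP => k; rewrite !ffunE.
under eq_bigr do rewrite ffunE scaler_sumr.
rewrite exchange_big; apply: eq_bigr => j _.
by rewrite mxE scaler_suml; apply: eq_bigr => l _; rewrite scalerA.
Qed.

Lemma mode3_1 T : mode3 1%:M T = T.
Proof.
apply/ffunP => k; rewrite ffunE (bigD1 k) //= mxE eqxx scale1r big1 ?addr0 //.
by move=> l /negPf; rewrite mxE eq_sym => ->; rewrite scale0r.
Qed.

Lemma mode3D P T U k : mode3 P (T + U) k = mode3 P T k + mode3 P U k.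
Proof. by rewrite !ffunE -big_split; apply: eq_bigr => l _; rewrite ffunE scalerDr. Qed.

Lemma mode3B P T U k : mode3 P (T - U) k = mode3 P T k - mode3 P U k.
Proof. by rewrite !ffunE -sumrB; apply: eq_bigr => l _; rewrite !ffunE scalerBr. Qed.

End Mode3Product.

Section MProductSlices.
Variables (R : realType) (n3 : nat) (M : 'M[R[i]]_n3).
Hypothesis HM : M \in unitmx.
Local Open Scope sesquilinear_scope.

Lemma thats_tunhat n1 n2 (S : tensor R n1 n2 n3) : thats M (tunhat M S) = S.
Proof. by rewrite [LHS](mode3_mul M (invmx M)) mulmxV // mode3_1. Qed.

Lemma tunhat_thats n1 n2 (T : tensor R n1 n2 n3) : tunhat M (thats M T) = T.
Proof. by rewrite [LHS](mode3_mul (invmx M) M) mulVmx // mode3_1. Qed.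

Lemma thats_inj n1 n2 (T U : tensor R n1 n2 n3) : thats M T = thats M U -> T = U.
Proof. by move=> eTU; rewrite -(tunhat_thats T) eTU tunhat_thats. Qed.

Lemma thats_tprod n1 n2 l (A : tensor R n1 n2 n3) (B : tensor R n2 l n3) k :
  thats M (tprod M A B) k = thats M A k *m thats M B k.
Proof. by rewrite thats_tunhat ffunE. Qed.

Lemma thats_tprod3 n1 n2 n4 (G : tensor R n1 n2 n3) (A : tensor R n2 n4 n3)
    (P : tensor R n4 n2 n3) k :
  thats M (tprod M (tprod M G A) P) k = thats M G k *m thats M A k *m thats M P k.
Proof. by rewrite !thats_tprod. Qed.

Lemma thats_tid n k : thats M (tid M n) k = 1%:M.
Proof. by rewrite thats_tunhat ffunE. Qed.

Lemma thats_tconjT n1 n2 (A : tensor R n1 n2 n3) k :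
  thats M (tconjT M A) k = thats M A k ^t conjc.
Proof. by rewrite thats_tunhat ffunE. Qed.

Lemma thats_one_MP_param n1 n2 (A : tensor R n1 n2 n3) (X0 W : tensor R n2 n1 n3) k :
  thats M (X0 + tprod M (tprod M (tprod M (tid M n2 - tprod M X0 A) W) A) X0) k =
  one_MP_param (thats M A k) (thats M X0 k) (thats M W k).
Proof.
rewrite [thats M _ k](mode3D M) !thats_tprod [thats M _ k](mode3B M).
by rewrite thats_tid thats_tprod.
Qed.

Lemma is_inner_invP n1 n2 (A : tensor R n1 n2 n3) (G : tensor R n2 n1 n3) :
  is_inner_inv M A G <->
  forall k, thats M A k *m thats M G k *m thats M A k = thats M A k.
Proof.
split=> [AGA k | AGA]; first by rewrite -!thats_tprod AGA.
by apply: thats_inj; apply/ffunP => k; rewrite !thats_tprod AGA.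
Qed.

Lemma is_MP_slice n1 n2 (A : tensor R n1 n2 n3) (P : tensor R n2 n1 n3) k :
  is_MP M A P ->
  thats M A k *m thats M P k *m thats M A k = thats M A k /\
  (thats M A k *m thats M P k) ^t conjc = thats M A k *m thats M P k.
Proof.
case=> /is_inner_invP APA _ AP_sym _; split=> //.
by rewrite -thats_tprod -thats_tconjT AP_sym.
Qed.

End MProductSlices.

Theorem theorem3p2 (R : realType) (n1 n2 n3 : nat) (M : 'M[R[i]]_n3)
  (HM : M \in unitmx) (A : tensor R n1 n2 n3) (X0 : tensor R n2 n1 n3)
  (HX0 : is_one_MP M A X0) :
  forall X : tensor R n2 n1 n3,
    is_one_MP M A X <->
    exists W : tensor R n2 n1 n3,
      X = X0 + tprod M (tprod M (tprod M (tid M n2 - tprod M X0 A) W) A) X0.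
Proof.
case: HX0 => G0 [P [/(is_inner_invP HM) AG0A P_MP ->]] X.
have APA k := (is_MP_slice HM k P_MP).1.
split=> [[G [P' [/(is_inner_invP HM) AGA P'_MP ->]]] | [W ->]].
- exists G; apply: (thats_inj HM); apply/ffunP => k.
  have [_ AP_sym] := is_MP_slice HM k P_MP.
  have [AP'A AP'_sym] := is_MP_slice HM k P'_MP.
  rewrite [RHS](thats_one_MP_param HM) [X in one_MP_param _ X](thats_tprod3 HM).
  rewrite (thats_tprod3 HM) -mulmxA.
  rewrite -(sym_inner_inv_mulmx_eq (APA k) AP_sym AP'A AP'_sym) mulmxA.
  by rewrite -(inner_inv_shift_self (thats M G0 k) (APA k) (AGA k))
             (inner_inv_shift_param (AG0A k) (APA k)).
- pose G := tunhat M [ffun k => inner_inv_shift (thats M A k) (thats M G0 k)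
                                  (thats M P k) (thats M W k)].
  have G_slice k : thats M G k = inner_inv_shift (thats M A k) (thats M G0 k)
                                   (thats M P k) (thats M W k).
    by rewrite thats_tunhat // ffunE.
  exists G, P; split; [apply/(is_inner_invP HM) => k | exact: P_MP |].
  + by rewrite G_slice (inner_inv_shiftP _ (AG0A k)).
  + apply: (thats_inj HM); apply/ffunP => k.
    rewrite [LHS](thats_one_MP_param HM) [X in one_MP_param _ X](thats_tprod3 HM).
    by rewrite (thats_tprod3 HM) G_slice (inner_inv_shift_param (AG0A k) (APA k)).
Qed.
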